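(* Let $t$ be a positive integer. For integers $m\ge 0$ and $n\ge 1$, let $g_t(m,n)$ denote the number of overpartitions of $n$ in which there are exactly $m$ overlined parts, the difference between the largest and the smallest part is at most $t$, and, if the difference between the largest and the smallest part is exactly $t$, then the largest part is not overlined. Then, as formal power series in $z$ and $q$, \[ \sum_{n\ge 1}\sum_{m\ge 0} g_t(m,n)z^mq^n=\frac{1}{1-q^t}\left(\frac{(-zq;q)_t}{(q;q)_t}-1\right). \]
   Context: An overpartition of a positive integer $n$ is a partition of $n$ (a weakly decreasing sequence of positive integers summing to $n$) in which the first occurrence of each distinct part size may be overlined. For comparisons of sizes, an overlined part $\overline{a}$ has value $a$. For a complex (or formal) $a$ and integer $n\ge 0$, $(a;q)_n=\prod_{k=0}^{n-1}(1-aq^k)$. *)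

From mathcomp Require Import all_boot all_order all_algebra.
Set Implicit Arguments. Unset Strict Implicit. Unset Printing Implicit Defensive.
Import Order.TTheory GRing.Theory Num.Theory.

(* An overpartition is a list of (part, overlined?) pairs. *)
Definition is_overpartition (n : nat) (s : seq (nat * bool)) : bool :=
  [&& sorted geq (map fst s),
      all (fun x => 0 < x.1) s,
      sumn (map fst s) == n &
      (* only the first occurrence of a part size may be overlined *)
      [forall i : 'I_(size s), (nth (0, false) s i).2 ==>
         [forall j : 'I_(size s), (j < i) ==>
            ((nth (0, false) s j).1 != (nth (0, false) s i).1)]]].

Definition largest_part (s : seq (nat * bool)) : nat := head 0 (map fst s).
Definition smallest_part (s : seq (nat * bool)) : nat := last 0 (map fst s).

Definition g_cond (t m : nat) (s : seq (nat * bool)) : bool :=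
  [&& count snd s == m,
      largest_part s - smallest_part s <= t &
      (largest_part s - smallest_part s == t) ==>
        all (fun x => (x.1 == largest_part s) ==> ~~ x.2) s].

(* g_t(m,n): every overpartition of n has at most n parts, each <= n, so it is
   encoded (injectively, surjectively) by a k-tuple over 'I_n.+1 * bool, k <= n. *)
Definition g (t m n : nat) : nat :=
  \sum_(k < n.+1)
    #|[pred s : k.-tuple ('I_n.+1 * bool) |
        let s' := [seq (nat_of_ord x.1, x.2) | x <- s] in
        is_overpartition n s' && g_cond t m s']|.

Local Open Scope ring_scope.

Definition fps := nat -> {poly int}.   (* n |-> coefficient of q^n (a poly in z) *)

Definition fone : fps := fun n => (n == 0%N)%:R.
Definition fsub (f h : fps) : fps := fun n => f n - h n.
Definition fmul (f h : fps) : fps := fun n => \sum_(i < n.+1) f i * h (n - i)%N.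
Definition ofpoly (p : {poly {poly int}}) : fps := fun n => p`_n.
(* the expansion of 1/(1 - q^j) = sum_k q^(jk), for j >= 1 *)
Definition geom (j : nat) : fps := fun n => (j %| n)%:R.

(* (a;q)_n = prod_{k<n} (1 - a q^k), with q = 'X (outer variable) *)
Definition qpoch (a : {poly {poly int}}) (n : nat) : {poly {poly int}} :=
  \prod_(k < n) (1 - a * 'X^k).

Definition zvar : {poly {poly int}} := ('X : {poly int})%:P.

(* 1/(q;q)_t = prod_{k=1}^t 1/(1 - q^k) *)
Fixpoint inv_qq (t : nat) : fps :=
  match t with
  | 0 => fone
  | t'.+1 => fmul (inv_qq t') (geom t'.+1)
  end.

Definition rhs (t : nat) : fps :=
  fmul (geom t)
       (fsub (fmul (ofpoly (qpoch (- (zvar * 'X)) t)) (inv_qq t)) fone).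

From mathcomp Require Import all_boot all_order all_algebra.
From mathcomp Require Import zify ring.
Set Implicit Arguments. Unset Strict Implicit. Unset Printing Implicit Defensive.
Import GRing.Theory.

(* Write p_t(m, n) for the number of overpartitions of n with m overlined parts,
   all of size at most t.  An overpartition counted by g_t(m, n) either has all
   its parts at most t, and then it satisfies the side conditions automatically,
   or its largest part exceeds t; subtracting t from that part and moving it to
   the end is then a bijection onto the overpartitions counted by g_t(m, n - t).
   Hence g_t(m, n) = p_t(m, n) + g_t(m, n - t), the coefficient form of
   (1 - q^t) G = P_t - 1 where P_t is the generating function of p_t.
   That P_t = (-zq;q)_t / (q;q)_t follows from
   (1 - q^(t+1)) P_(t+1) = (1 + z q^(t+1)) P_t: an overpartition with largest
   part t+1 loses that part, which is either overlined and single (leaving one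
   counted by z q^(t+1) P_t) or not (remove one copy and pass its overline on to
   the next copy, leaving one counted by q^(t+1) P_(t+1)).  The power series
   identities are checked on polynomial truncations. *)

Local Notation opart := (seq (nat * bool)).

Definition bounded_seqs_of_size N k : seq opart :=
  [seq [seq (nat_of_ord x.1, x.2) | x <- val s] | s <- enum {: k.-tuple ('I_N.+1 * bool)}].

Definition bounded_seqs N : seq opart :=
  flatten [seq bounded_seqs_of_size N k | k <- iota 0 N.+1].

Lemma mem_bounded_seqs_of_size N k s :
  (s \in bounded_seqs_of_size N k) = (size s == k) && all (fun x => x.1 <= N) s.
Proof.
apply/mapP/andP => [[u _ ->]|[/eqP s_k /allP s_le]].
  rewrite size_map size_tuple; split=> //.
  by apply/allP=> _ /mapP [y _ ->] /=; rewrite -ltnS ltn_ord.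
pose u := [seq ((inord x.1 : 'I_N.+1), x.2) | x <- s].
have u_k : size u == k by rewrite size_map s_k.
exists (Tuple u_k); first by rewrite mem_enum.
rewrite /= -map_comp -[LHS]map_id; apply/eq_in_map => -[a b] /s_le /= a_le.
by rewrite inordK.
Qed.

Lemma bounded_seqs_uniq N : uniq (bounded_seqs N).
Proof.
have uniq_k k : uniq (bounded_seqs_of_size N k).
  rewrite map_inj_uniq ?enum_uniq // => u v /(inj_map _) uv; apply: val_inj; apply: uv.
  by case=> [a b] [c d] /= [/ord_inj -> ->].
rewrite /bounded_seqs; elim: (iota 0 N.+1) (iota_uniq 0 N.+1) => //= k ks IH /andP [k_ks /IH].
rewrite cat_uniq uniq_k => -> /=; rewrite andbT; apply/hasP => -[s /flattenP [_ /mapP [k' k'_ks ->]]].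
rewrite !mem_bounded_seqs_of_size => /andP [/eqP s_k' _] /andP [/eqP s_k _].
by move: k_ks; rewrite -s_k s_k' k'_ks.
Qed.

Lemma mem_bounded_seqs N s :
  (s \in bounded_seqs N) = (size s <= N) && all (fun x => x.1 <= N) s.
Proof.
apply/flattenP/andP => [[_ /mapP [k k_N ->]]|[s_N s_le]].
  by rewrite mem_bounded_seqs_of_size mem_iota in k_N * => /andP [/eqP ->].
exists (bounded_seqs_of_size N (size s)); last by rewrite mem_bounded_seqs_of_size eqxx.
by apply/mapP; exists (size s); rewrite ?mem_iota.
Qed.

Lemma overpartition_in_bounded_seqs n s : is_overpartition n s -> s \in bounded_seqs n.
Proof.
case/and4P=> _ s_pos /eqP <- _; rewrite mem_bounded_seqs.
elim: s s_pos => //= x r IH /andP [x_pos /IH /andP [r_size r_le]].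
apply/andP; split; first by rewrite -add1n leq_add.
rewrite leq_addr /=; apply: sub_all r_le => y /= y_le; exact: leq_trans y_le (leq_addl _ _).
Qed.

(* Every overpartition of n occurs exactly once in [bounded_seqs n]. *)
Definition card_op n (P : pred opart) : nat :=
  count (fun s => is_overpartition n s && P s) (bounded_seqs n).

Lemma g_card_op t m n : g t m n = card_op n (g_cond t m).
Proof.
rewrite /g /card_op /bounded_seqs count_flatten -map_comp sumnE big_map.
rewrite -[iota 0 n.+1]/(index_iota 0 n.+1) big_mkord; apply: eq_bigr => k _ /=.
rewrite cardE count_map /enum_mem size_filter filter_predT.
exact: eq_count.
Qed.

Lemma card_op_bij n1 n2 (P Q : pred opart) (f h : opart -> opart) :
  (forall s, is_overpartition n1 s -> P s -> is_overpartition n2 (f s) && Q (f s)) ->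
  (forall s, is_overpartition n2 s -> Q s -> is_overpartition n1 (h s) && P (h s)) ->
  (forall s, is_overpartition n1 s -> P s -> h (f s) = s) ->
  (forall s, is_overpartition n2 s -> Q s -> f (h s) = s) ->
  card_op n1 P = card_op n2 Q.
Proof.
move=> PQ QP fK hK; rewrite /card_op -!size_filter.
set A := filter _ (bounded_seqs n1); set B := filter _ (bounded_seqs n2).
have memA u : (u \in A) = is_overpartition n1 u && P u.
  by rewrite mem_filter andb_idr // => /andP [/overpartition_in_bounded_seqs].
have memB u : (u \in B) = is_overpartition n2 u && Q u.
  by rewrite mem_filter andb_idr // => /andP [/overpartition_in_bounded_seqs].
rewrite -(size_map h B); apply/perm_size/uniq_perm.
- exact/filter_uniq/bounded_seqs_uniq.
- rewrite map_inj_in_uniq ?filter_uniq ?bounded_seqs_uniq // => u v.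
  by rewrite !memB => /andP [u_op u_Q] /andP [v_op v_Q] huv; rewrite -(hK u) // huv hK.
move=> s; rewrite memA; apply/idP/mapP => [/andP [s_op s_P]|[u]].
  by exists (f s); rewrite ?memB ?PQ ?fK.
by rewrite memB => /andP [u_op u_Q] ->; apply: QP.
Qed.

Lemma card_op_split n (P A : pred opart) :
  card_op n P = card_op n (predI P A) + card_op n (predI P (predC A)).
Proof.
rewrite /card_op -size_filter -(count_predC A) !count_filter.
by congr (_ + _); apply: eq_count => s /=; rewrite andbC andbA.
Qed.

Lemma card_op0 n (P : pred opart) :
  (forall s, is_overpartition n s -> ~~ P s) -> card_op n P = 0.
Proof.
move=> P0; apply/eqP; rewrite -leqn0 leqNgt -has_count; apply/hasP => -[s _ /andP [s_op]].
by apply/negP/P0.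
Qed.

Fixpoint only_first_overlined (s : opart) : bool :=
  if s is x :: r then all (fun y => y.2 ==> (y.1 != x.1)) r && only_first_overlined r
  else true.

Lemma only_first_overlinedP s :
  reflect (forall i j, i < size s -> j < i -> (nth (0, false) s i).2 ->
             (nth (0, false) s j).1 != (nth (0, false) s i).1)
          (only_first_overlined s).
Proof.
elim: s => [|x r IH] /=; first by constructor.
apply: (iffP andP) => [[/all_nthP r_x /IH r_ok] [|i] [|j] //= i_r j_i i_ov|s_ok].
  by rewrite eq_sym; have := r_x (0, false) i i_r; rewrite i_ov.
- exact: r_ok.
split; last by apply/IH => i j i_r j_i; apply: (s_ok i.+1 j.+1).
apply/(all_nthP (0, false)) => i i_r; apply/implyP => i_ov.
by rewrite eq_sym; apply: (s_ok i.+1 0).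
Qed.

Lemma is_overpartitionE n s :
  is_overpartition n s = [&& sorted geq (map fst s), all (fun x => 0 < x.1) s,
                             sumn (map fst s) == n & only_first_overlined s].
Proof.
congr [&& _, _, _ & _]; apply/forallP/only_first_overlinedP => [s_ok i j i_s j_i i_ov|s_ok i].
  have := s_ok (Ordinal i_s); rewrite i_ov => /forallP /(_ (Ordinal (ltn_trans j_i i_s))).
  by rewrite /= j_i.
by apply/implyP => i_ov; apply/forallP => j; apply/implyP => j_i; apply: s_ok.
Qed.

Lemma is_overpartition_nil n : is_overpartition n [::] = (n == 0).
Proof. by rewrite is_overpartitionE; case: n. Qed.

Lemma addn_eq_subn a b n : (a + b == n) = (a <= n) && (b == n - a).
Proof. by apply/eqP/andP => [<-|[a_n /eqP ->]]; [rewrite leq_addr addKn | rewrite subnKC]. Qed.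

Lemma is_overpartition_cons n x r :
  is_overpartition n (x :: r) =
  [&& 0 < x.1 <= n, all (fun y => y.1 <= x.1) r,
      all (fun y => y.2 ==> (y.1 != x.1)) r & is_overpartition (n - x.1) r].
Proof.
rewrite !is_overpartitionE /= path_sortedE ?all_map; last by move=> a b c ba cb; apply: leq_trans cb ba.
rewrite addn_eq_subn; apply/and5P/and4P => [[/andP [r_le r_sorted] /andP [x_pos r_pos]
  /andP [x_n r_sum] r_ov r_ok]|[/andP [x_pos x_n] r_le r_ov /and4P [r_sorted r_pos r_sum r_ok]]].
  by split; rewrite ?x_pos //; apply/and4P.
by split=> //; apply/andP.
Qed.

Lemma is_overpartition_rcons n r y :
  is_overpartition n (rcons r y) =
  [&& 0 < y.1 <= n, all (fun z => y.1 <= z.1) r,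
      y.2 ==> (y.1 \notin map fst r) & is_overpartition (n - y.1) r].
Proof.
have ok_rcons u : only_first_overlined (rcons u y) =
                  only_first_overlined u && (y.2 ==> (y.1 \notin map fst u)).
  elim: u => [|x u IH] /=; first by case: y => a [].
  rewrite IH all_rcons in_cons negb_or eq_sym.
  by case: y.2; case: (all _ u); case: (only_first_overlined u); case: (_ == _); case: (_ \in _).
rewrite !is_overpartitionE map_rcons -rev_sorted rev_rcons /= path_sortedE; last first.
  by move=> a b c; apply: leq_trans.
rewrite all_rev all_map rev_sorted all_rcons -cats1 sumn_cat /= addn0 addnC addn_eq_subn ok_rcons.
apply/and5P/and4P => [[/andP [r_le r_sorted] /andP [y_pos r_pos]
  /andP [y_n r_sum] r_ok y_ov]|[/andP [y_pos y_n] r_le y_ov /and4P [r_sorted r_pos r_sum r_ok]]].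
  by split; rewrite ?y_pos //; apply/and4P.
by split=> //; apply/andP.
Qed.

Lemma overpartition_le_largest n s :
  is_overpartition n s -> all (fun y => y.1 <= largest_part s) s.
Proof. by case: s => //= x r; rewrite is_overpartition_cons leqnn => /and4P []. Qed.

Lemma overpartition_ge_smallest n s :
  is_overpartition n s -> all (fun y => smallest_part s <= y.1) s.
Proof.
case/lastP: s => // r y; rewrite is_overpartition_rcons all_rcons /smallest_part.
by rewrite map_rcons last_rcons leqnn => /and4P [].
Qed.

Lemma largest_part_leq s a : all (fun y => y.1 <= a) s -> largest_part s <= a.
Proof. by case: s => //= x r /andP []. Qed.

Lemma smallest_part_geq s a :
  s != [::] -> all (fun y => a <= y.1) s -> a <= smallest_part s.
Proof.
case/lastP: s => // r y _; rewrite all_rcons /smallest_part map_rcons last_rcons.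
by case/andP.
Qed.

Definition lower_largest t (s : opart) : opart :=
  if s is x :: r then rcons r (x.1 - t, x.2) else [::].

Definition raise_smallest t (s : opart) : opart :=
  if s is x :: r then let y := last x r in (y.1 + t, y.2) :: belast x r else [::].

Lemma raise_smallest_rcons t r y : raise_smallest t (rcons r y) = (y.1 + t, y.2) :: r.
Proof. by case: r => [|x r] //=; rewrite last_rcons belast_rcons. Qed.

Lemma count_snd_rcons r (y : nat * bool) : count snd (rcons r y) = y.2 + count snd r.
Proof. by rewrite -cats1 count_cat /= addn0 addnC. Qed.

Lemma lower_largestP t m n s : 0 < t -> t < largest_part s ->
  is_overpartition n s -> g_cond t m s ->
  is_overpartition (n - t) (lower_largest t s) && g_cond t m (lower_largest t s).
Proof.
case: s => [|[p b] r] t_pos //; rewrite /largest_part /= => t_p s_op.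
have /andP [_ /allP r_ge_l] := overpartition_ge_smallest s_op.
move: s_op; rewrite is_overpartition_cons /= => /and4P [/andP [_ p_n] r_le r_ov r_op].
rewrite /g_cond /largest_part /= => /and3P [/eqP s_m p_l s_max].
set l := smallest_part _ in p_l s_max r_ge_l; clearbody l.
have r_ge z : z \in r -> p - t <= z.1.
  by move=> z_r; apply: leq_trans (r_ge_l z z_r); lia.
have b_new : b ==> (p - t \notin map fst r).
  apply/implyP => b_ov; apply/mapP => -[z z_r z_pt].
  have := r_ge_l z z_r; rewrite -z_pt => l_pt.
  have p_lt : p - l = t by lia.
  by move: s_max; rewrite p_lt !eqxx b_ov.
have L_p : largest_part (rcons r (p - t, b)) <= p.
  by apply: largest_part_leq; rewrite all_rcons leq_subr.
rewrite -/(largest_part _) is_overpartition_rcons count_snd_rcons s_m eqxx b_new /=.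
rewrite /smallest_part map_rcons last_rcons (_ : n - t - (p - t) = n - p) ?r_op; last by lia.
have -> : 0 < p - t <= n - t by apply/andP; split; lia.
have -> /= : all (fun z => p - t <= z.1) r by apply/allP.
apply/andP; split; first by lia.
apply/implyP => /eqP L_eq; have -> : largest_part (rcons r (p - t, b)) = p by lia.
rewrite all_rcons /= (_ : (p - t == p) = false) /=; last by apply/eqP; lia.
by apply: sub_all r_ov => -[a []] /= => [/negbTE ->|]; rewrite ?implybT.
Qed.

Lemma raise_smallestP t m n s : 0 < t -> t < n ->
  is_overpartition (n - t) s -> g_cond t m s ->
  [&& is_overpartition n (raise_smallest t s), g_cond t m (raise_smallest t s)
    & t < largest_part (raise_smallest t s)].
Proof.
case/lastP: s => [|r [a c]] t_pos t_n; first by rewrite is_overpartition_nil; lia.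
move=> s_op; have /allP s_le := overpartition_le_largest s_op.
move: s_op; rewrite is_overpartition_rcons /= => /and4P [/andP [a_pos a_nt] r_ge c_new r_op].
rewrite /g_cond /smallest_part map_rcons last_rcons -/(smallest_part _) count_snd_rcons /=.
case/and3P=> [/eqP s_m M_a s_max].
set M := largest_part _ in s_le M_a s_max; clearbody M.
have r_le z : z \in r -> z.1 <= a + t.
  move=> z_r; apply: leq_trans (s_le z _) _; first by rewrite mem_rcons in_cons z_r orbT.
  lia.
have r_top : all (fun z => (z.1 == a + t) ==> ~~ z.2) r.
  apply/allP => z z_r; apply/implyP => /eqP z_at.
  have z_M : z.1 <= M by apply: s_le; rewrite mem_rcons in_cons z_r orbT.
  have M_at : M = a + t by rewrite z_at in z_M; lia.
  move: s_max; rewrite M_at addKn eqxx => /allP /(_ z).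
  by rewrite mem_rcons in_cons z_r orbT z_at eqxx; apply.
rewrite raise_smallest_rcons /g_cond /largest_part /= -/(smallest_part _).
rewrite is_overpartition_cons /= s_m eqxx (_ : n - (a + t) = n - t - a) ?r_op; last by lia.
have -> /= : 0 < a + t <= n by apply/andP; split; lia.
have -> /= : all (fun z => z.1 <= a + t) r by apply/allP.
have -> /= : all (fun z => z.2 ==> (z.1 != a + t)) r.
  by apply: sub_all r_top => -[b []] //=; rewrite implybF.
set sm := smallest_part _.
have a_sm : a <= sm by apply: smallest_part_geq; rewrite //= leq_addr.
rewrite r_top andbT eqxx (_ : t < a + t) ?andbT; last by lia.
apply/andP; split; [lia | apply/implyP => /eqP sm_a].
have /eqP {}sm_a : sm == a by apply/eqP; lia.
have : sm \in (a + t) :: map fst r by apply: mem_last.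
rewrite sm_a in_cons (_ : (a == a + t) = false) /=; last by apply/eqP; lia.
by move=> a_r; move: c_new; rewrite a_r implybF.
Qed.

Lemma lower_largestK t s : t < largest_part s -> raise_smallest t (lower_largest t s) = s.
Proof. by case: s => [|[p b] r] //= t_p; rewrite raise_smallest_rcons subnK // ltnW. Qed.

Lemma raise_smallestK t s : s != [::] -> lower_largest t (raise_smallest t s) = s.
Proof. by case/lastP: s => // r [a c] _; rewrite raise_smallest_rcons /= addnK. Qed.

Lemma overpartition_all_le n s a :
  is_overpartition n s -> all (fun y => y.1 <= a) s = (largest_part s <= a).
Proof.
case: s => //= x r; rewrite is_overpartition_cons => /and4P [_ r_le _ _].
by apply: andb_idr => x_a; apply: sub_all r_le => y /= /leq_trans; apply.
Qed.

Lemma overpartition_nonnil n s : 0 < n -> is_overpartition n s -> s != [::].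
Proof. by case: s => //; rewrite is_overpartition_nil lt0n => /negbTE ->. Qed.

Lemma smallest_part_gt0 n s : 0 < n -> is_overpartition n s -> 0 < smallest_part s.
Proof.
move=> n_pos s_op; have := overpartition_nonnil n_pos s_op.
case/lastP: s s_op => // r y; rewrite is_overpartition_rcons /smallest_part map_rcons last_rcons.
by case/and4P => /andP [].
Qed.

Lemma largest_part_le_weight n s : is_overpartition n s -> largest_part s <= n.
Proof. by case: s => //= x r; rewrite is_overpartition_cons => /and4P [/andP []]. Qed.

Definition parts_le t m : pred opart :=
  fun s => (count snd s == m) && all (fun y => y.1 <= t) s.

Definition card_op_le t m n : nat := card_op n (parts_le t m).

Lemma g_rec t m n : 0 < t -> 0 < n ->
  g t m n = card_op_le t m n + (if t < n then g t m (n - t) else 0).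
Proof.
move=> t_pos n_pos; rewrite !g_card_op (card_op_split _ _ (fun s => largest_part s <= t)).
congr (_ + _).
  apply: eq_count => s /=; case s_op: (is_overpartition n s) => //=.
  rewrite /parts_le (overpartition_all_le _ s_op) /g_cond.
  case L_t: (largest_part s <= t); last by rewrite !andbF.
  have := smallest_part_gt0 n_pos s_op => sm_pos.
  have d_lt : largest_part s - smallest_part s < t by lia.
  by rewrite (ltnW d_lt) (ltn_eqF d_lt) andbT.
case: ifP => t_n; last first.
  apply: card_op0 => s s_op; apply/andP => -[_ /=].
  by have := largest_part_le_weight s_op; lia.
apply: (card_op_bij (f := lower_largest t) (h := raise_smallest t)) => s s_op.
- by case/andP=> s_g /= L_t; apply: lower_largestP; rewrite // ltnNge.
- move=> s_g; case/and3P: (raise_smallestP t_pos t_n s_op s_g) => r_op r_g L_t.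
  by rewrite /= r_op r_g -ltnNge.
- by case/andP=> _ /=; rewrite -ltnNge => /lower_largestK.
- by move=> _; apply/raise_smallestK/(overpartition_nonnil _ s_op); rewrite subn_gt0.
Qed.

Definition largest_is t : pred opart := fun s => largest_part s == t.

(* Meant for overpartitions with largest part t: that part is overlined and
   occurs only once. *)
Definition overlined_once t : pred opart :=
  fun s => (head (0, false) s).2 && (largest_part (behead s) != t).

Lemma card_op_le_largest_neq t m n :
  card_op n (predI (parts_le t.+1 m) (predC (largest_is t.+1))) = card_op_le t m n.
Proof.
apply: eq_count => s; case s_op: (is_overpartition n s) => //=.
rewrite /parts_le !(overpartition_all_le _ s_op) -andbA; congr (_ && _).
by rewrite -[RHS]ltnS ltn_neqAle andbC.
Qed.

Lemma card_op_largest_is_gt t n (P : pred opart) :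
  n < t -> card_op n (predI P (largest_is t)) = 0.
Proof.
move=> n_t; apply: card_op0 => s s_op; apply/andP => -[_ /eqP L_t].
by have := largest_part_le_weight s_op; lia.
Qed.

Lemma card_op_overlined_once t m n : t < n ->
  card_op n (predI (predI (parts_le t.+1 m.+1) (largest_is t.+1)) (overlined_once t.+1))
  = card_op_le t m (n - t.+1).
Proof.
move=> t_n; apply: (card_op_bij (f := behead) (h := cons (t.+1, true))) => [[|x r]|r|[|x r]|r] //.
- rewrite is_overpartition_cons /parts_le /largest_is /overlined_once /= => /and4P [_ _ _ r_op].
  move=> /andP [/andP [/andP [/eqP s_m /andP [_ r_le]] /eqP x_t] /andP [x_ov r_L]].
  have {}x_t : x.1 = t.+1 := x_t.
  rewrite x_t in r_op; rewrite r_op /parts_le (overpartition_all_le _ r_op) -ltnS ltn_neqAle r_L.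
  by move: s_m; rewrite x_ov add1n => -[->]; rewrite eqxx largest_part_leq.
- move=> r_op /andP [/eqP r_m r_le].
  have r_L : largest_part r <= t by rewrite -(overpartition_all_le _ r_op).
  rewrite is_overpartition_cons /= r_op t_n /parts_le /largest_is /overlined_once /=.
  rewrite r_m !eqxx ltn_eqF // !andbT.
  have r_le' : all (fun y => y.1 <= t.+1) r by apply: sub_all r_le => y /= /leqW.
  have r_ov : all (fun y => y.2 ==> (y.1 != t.+1)) r.
    by apply: sub_all r_le => y /= y_t; rewrite ltn_eqF ?implybT.
  by rewrite r_le' r_ov ltnSn.
- move=> _ /andP [/andP [_ /eqP x_t] /andP [x_ov _]].
  have {}x_t : x.1 = t.+1 := x_t.
  by case: x x_t x_ov => a b /= -> ->.
Qed.

Lemma card_op_overlined_once0 t n :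
  card_op n (predI (predI (parts_le t.+1 0) (largest_is t.+1)) (overlined_once t.+1)) = 0.
Proof.
apply: card_op0 => -[|[a b] r] _; rewrite /= /parts_le /overlined_once //=.
by case: b; rewrite ?andbF.
Qed.

Definition drop_top (s : opart) : opart :=
  if s is x :: y :: r then (y.1, y.2 || x.2) :: r else [::].

Definition push_top j (s : opart) : opart :=
  if s is y :: r then
    if y.1 == j then (j, y.2) :: (j, false) :: r else (j, false) :: s
  else [:: (j, false)].

Lemma push_topK j : cancel (push_top j) drop_top.
Proof. by case=> [|[a b] r] //=; case: ifP => [/eqP ->|] //=; rewrite orbF. Qed.

Lemma is_overpartition_head_overline n a b c r :
  is_overpartition n ((a, b) :: r) = is_overpartition n ((a, c) :: r).
Proof. by rewrite !is_overpartition_cons. Qed.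

Lemma drop_topP t m n s : is_overpartition n s ->
  parts_le t.+1 m s && largest_is t.+1 s && ~~ overlined_once t.+1 s ->
  is_overpartition (n - t.+1) (drop_top s) && parts_le t.+1 m (drop_top s).
Proof.
rewrite /parts_le /largest_is /overlined_once /largest_part.
case: s => [|x [|[c d] r]] /=; rewrite ?andbF ?andbT // => s_op.
  case/andP=> [/andP [/andP [/eqP x_m _] /eqP x_t] x_ov].
  move: s_op; rewrite is_overpartition_cons is_overpartition_nil x_t /=.
  by rewrite is_overpartition_nil -x_m addn0 (negbTE x_ov) => /andP [_ ->].
case/andP=> [/andP [/andP [/eqP s_m /andP [_ r_le]] /eqP x_t] x_ov].
move: s_op; rewrite is_overpartition_cons x_t /= => /and4P [_ _ /andP [y_ov _] r_op].
rewrite (is_overpartition_head_overline _ _ _ d) r_op r_le andbT -s_m.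
by move: x_ov y_ov {s_m r_op}; case: x.2; case: d; rewrite //= negbK => /eqP ->; rewrite eqxx.
Qed.

Lemma push_topP t m n s : t < n ->
  is_overpartition (n - t.+1) s -> parts_le t.+1 m s ->
  is_overpartition n (push_top t.+1 s) &&
  (parts_le t.+1 m (push_top t.+1 s) && largest_is t.+1 (push_top t.+1 s)
   && ~~ overlined_once t.+1 (push_top t.+1 s)).
Proof.
rewrite /parts_le /largest_is /overlined_once /largest_part.
case: s => [|[c d] r] t_n /=.
  rewrite is_overpartition_nil => n_t /andP [/eqP <- _].
  by rewrite is_overpartition_cons /= is_overpartition_nil t_n n_t !eqxx ltnSn.
move=> s_op /andP [/eqP s_m /andP [c_le r_le]].
have := s_op; rewrite is_overpartition_cons /= => /and4P [_ r_lec r_ov _].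
case: ifP => [/eqP c_t|c_t] /=.
  subst c; rewrite is_overpartition_cons /= (is_overpartition_head_overline _ _ false d) s_op.
  by rewrite -s_m r_le r_ov t_n ltnSn !eqxx andbF.
have c_lt : c < t.+1 by rewrite ltn_neqAle c_t c_le.
rewrite is_overpartition_cons /= s_op t_n -s_m c_le r_le ltnSn (ltn_eqF c_lt) !eqxx /=.
rewrite implybT !andbT; apply: sub_all r_lec => y /= y_c.
by rewrite ltn_eqF ?implybT // (leq_ltn_trans y_c).
Qed.

Lemma drop_topK t n s : is_overpartition n s ->
  largest_is t.+1 s -> ~~ overlined_once t.+1 s -> push_top t.+1 (drop_top s) = s.
Proof.
rewrite /largest_is /overlined_once /largest_part.
case: s => [|[a b] [|[c d] r]] //= s_op /eqP a_t; subst a.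
  by rewrite andbT => /negbTE ->.
move: s_op; rewrite is_overpartition_cons /= => /and4P [_ _ /andP [d_c _] _].
case: ifP => [/eqP c_t _|_ /negbTE]; last by rewrite andbT => ->; rewrite orbF.
by move: d_c; rewrite c_t eqxx implybF => /negbTE ->.
Qed.

Lemma card_op_not_overlined_once t m n : t < n ->
  card_op n (predI (predI (parts_le t.+1 m) (largest_is t.+1)) (predC (overlined_once t.+1)))
  = card_op_le t.+1 m (n - t.+1).
Proof.
move=> t_n; apply: (card_op_bij (f := drop_top) (h := push_top t.+1)) => s s_op.
- exact: drop_topP.
- exact: push_topP.
- by case/andP=> [/andP [_ s_L] s_O]; apply: drop_topK s_op s_L s_O.
- by move=> _; apply: push_topK.
Qed.

Lemma card_op_le_rec t m n :
  card_op_le t.+1 m n = card_op_le t m n +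
    (if t < n then card_op_le t.+1 m (n - t.+1) +
                   (if m == 0 then 0 else card_op_le t m.-1 (n - t.+1))
     else 0).
Proof.
rewrite {1}/card_op_le (card_op_split _ _ (largest_is t.+1)) addnC card_op_le_largest_neq.
congr (_ + _); case: ifP => t_n; last by apply: card_op_largest_is_gt; rewrite ltnS leqNgt t_n.
rewrite (card_op_split _ _ (overlined_once t.+1)) addnC card_op_not_overlined_once //.
by congr (_ + _); case: m => [|m]; [apply: card_op_overlined_once0 | apply: card_op_overlined_once].
Qed.

Lemma card_op_nil n (P : pred opart) :
  (forall s, is_overpartition n s -> P s -> s = [::]) -> card_op n P = (n == 0) && P [::].
Proof.
move=> P_nil; case P0: ((n == 0) && P [::]); last first.
  apply: card_op0 => s s_op; apply/negP => s_P.
  by move: (P_nil s s_op s_P) P0 => s_nil; rewrite -is_overpartition_nil -s_nil s_op s_P.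
have nil_in : [::] \in bounded_seqs n by rewrite mem_bounded_seqs.
rewrite -nil_in -(count_uniq_mem _ (bounded_seqs_uniq n)); apply: eq_count => s /=.
by apply/andP/eqP => [[]|->]; [apply: P_nil | rewrite is_overpartition_nil; apply/andP].
Qed.

Lemma card_op_le0 m n : card_op_le 0 m n = (n == 0) && (m == 0).
Proof.
rewrite /card_op_le card_op_nil => [|[|x r] //]; first by case: m.
by rewrite is_overpartition_cons /parts_le /= => /andP [/andP [x_pos _] _] /and3P [_]; rewrite leqNgt x_pos.
Qed.

Lemma card_op_le_weight0 t m : card_op_le t m 0 = (m == 0).
Proof.
rewrite /card_op_le card_op_nil => [|[|x r] //]; first by case: m.
by rewrite is_overpartition_cons => /andP [/andP [x_pos x_0]]; move: x_pos; rewrite leqNgt ltnS x_0.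
Qed.

Section TakePoly.
Local Open Scope ring_scope.
Variable R : nzSemiRingType.

Lemma take_polyMl N (A B : {poly R}) : take_poly N (take_poly N A * B) = take_poly N (A * B).
Proof.
apply/polyP => i; rewrite !coef_take_poly; case: ltnP => // i_N; rewrite !coefM.
by apply: eq_bigr => k _; rewrite coef_take_poly (leq_ltn_trans (leq_ord k) i_N).
Qed.

Lemma take_polyMr N (A B : {poly R}) : take_poly N (A * take_poly N B) = take_poly N (A * B).
Proof.
apply/polyP => i; rewrite !coef_take_poly; case: ltnP => // i_N; rewrite !coefM.
by apply: eq_bigr => k _; rewrite coef_take_poly (leq_ltn_trans (leq_subr _ _) i_N).
Qed.

End TakePoly.

Section TruncatedSeries.
Local Open Scope ring_scope.
Local Notation PP := {poly {poly int}}.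

Definition series N (f : fps) : PP := \poly_(i < N) f i.

Lemma coef_series N f i : (series N f)`_i = if (i < N)%N then f i else 0.
Proof. exact: coef_poly. Qed.

Lemma take_series N f : take_poly N (series N f) = series N f.
Proof. exact/take_poly_id/size_poly. Qed.

Lemma series_fmul N f h : series N (fmul f h) = take_poly N (series N f * series N h).
Proof.
apply/polyP => i; rewrite coef_take_poly coef_series; case: ltnP => // i_N.
rewrite coefM; apply: eq_bigr => k _; rewrite !coef_series (leq_ltn_trans (leq_subr _ _) i_N).
by rewrite (leq_ltn_trans (leq_ord k) i_N).
Qed.

Lemma series_ofpoly N P : series N (ofpoly P) = take_poly N P.
Proof. by []. Qed.

Lemma coef_one_subXn_mul j (A : PP) n :
  ((1 - 'X^j) * A)`_n = A`_n - (if (n < j)%N then 0 else A`_(n - j)).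
Proof. by rewrite mulrBl mul1r coefB coefXnM. Qed.

Lemma series_geom N j : (0 < j)%N -> take_poly N ((1 - 'X^j) * series N (geom j)) = take_poly N 1.
Proof.
move=> j_pos; apply/polyP => i; rewrite !coef_take_poly; case: ltnP => // i_N.
rewrite coef_one_subXn_mul !coef_series i_N coef1 /geom.
case: ltnP => [i_j|j_i]; last first.
  rewrite (leq_ltn_trans (leq_subr _ _) i_N) dvdn_subl // subrr.
  by case: i j_i {i_N} => //; rewrite leqn0 => /eqP j0; rewrite j0 in j_pos.
by rewrite subr0; case: i {i_N} i_j => [|i] i_j; rewrite ?dvdn0 ?gtnNdvd.
Qed.

Definition opgf t : fps := fmul (ofpoly (qpoch (- (zvar * 'X)) t)) (inv_qq t).

Lemma series_opgf t N :
  series N (opgf t) = take_poly N (qpoch (- (zvar * 'X)) t * series N (inv_qq t)).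
Proof. by rewrite series_fmul series_ofpoly take_polyMl. Qed.

Lemma qpochS (a : PP) t : qpoch a t.+1 = qpoch a t * (1 - a * 'X^t).
Proof. by rewrite /qpoch big_ord_recr. Qed.

Lemma opgf_rec t n :
  opgf t.+1 n = opgf t n +
    (if (n < t.+1)%N then 0 else opgf t.+1 (n - t.+1)%N + 'X * opgf t (n - t.+1)%N).
Proof.
set T := series n.+1 (inv_qq t); set G := series n.+1 (geom t.+1).
have key : take_poly n.+1 ((1 - 'X^(t.+1)) * series n.+1 (opgf t.+1)) =
           take_poly n.+1 ((1 + zvar * 'X^(t.+1)) * series n.+1 (opgf t)).
  rewrite !series_opgf !take_polyMr /= series_fmul mulrA take_polyMr -mulrA.
  have -> : (1 - 'X^(t.+1)) * (qpoch (- (zvar * 'X)) t.+1 * (T * G)) =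
            ((1 - 'X^(t.+1)) * G) * ((1 + zvar * 'X^(t.+1)) * (qpoch (- (zvar * 'X)) t * T)).
    by rewrite qpochS mulNr opprK exprS mulrA; ring.
  by rewrite -[LHS]take_polyMl series_geom // take_polyMl mul1r.
have := congr1 (fun p : PP => p`_n) key; rewrite !coef_take_poly ltnSn.
have sub_lt k : (n - k < n.+1)%N by rewrite ltnS leq_subr.
rewrite coef_one_subXn_mul mulrDl mul1r coefD -mulrA coefCM coefXnM !coef_series ltnSn !sub_lt.
by move/(canRL (subrK _)) => ->; case: ifP; rewrite ?mulr0 ?addr0 // addrAC addrA.
Qed.

Lemma rhs_rec t n : (0 < t)%N ->
  rhs t n = opgf t n - (n == 0%N)%:R + (if (n < t)%N then 0 else rhs t (n - t)%N).
Proof.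
move=> t_pos.
have key : take_poly n.+1 ((1 - 'X^t) * series n.+1 (rhs t)) = series n.+1 (fsub (opgf t) fone).
  rewrite series_fmul take_polyMr mulrA -take_polyMl series_geom // take_polyMl mul1r.
  exact: take_series.
have := congr1 (fun p : PP => p`_n) key; rewrite coef_take_poly ltnSn.
have sub_lt : (n - t < n.+1)%N by rewrite ltnS leq_subr.
by rewrite coef_one_subXn_mul !coef_series ltnSn sub_lt => /(canRL (subrK _)).
Qed.

Lemma coef_opgf t n m : (opgf t n)`_m = Posz (card_op_le t m n).
Proof.
elim: t n m => [|t IHt] n m.
  have := congr1 (fun p : PP => p`_n) (series_opgf 0 n.+1).
  rewrite coef_series coef_take_poly ltnSn /qpoch big_ord0 mul1r coef_series ltnSn => ->.
  by rewrite card_op_le0 /= /fone; case: (n == 0); rewrite ?coef1 ?coef0; case: m.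
elim/ltn_ind: n m => n IHn m.
rewrite opgf_rec card_op_le_rec coefD IHt; case: ltnP => [n_t|t_n].
  by rewrite coef0 addr0 addn0.
rewrite coefD coefXM IHt IHn; last by rewrite ltn_subrL; lia.
by case: (m == 0); rewrite ?addr0 ?addn0.
Qed.

End TruncatedSeries.

Theorem theorem1p1 (t : nat) (ht : (0 < t)%N) (m n : nat) :
  ((rhs t n)`_m = if n == 0%N then 0 else Posz (g t m n))%R.
Proof.
elim/ltn_ind: n m => n IHn m.
rewrite rhs_rec // coefD coefB coef_opgf.
case: n IHn => [|n] IHn /=.
  by rewrite ht coef0 card_op_le_weight0 coef1 addr0; case: m.
rewrite g_rec // coef0 subr0; case: ltnP => [n_t|_].
  by rewrite (ltnNge t) (ltnW n_t) coef0 addr0 addn0.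
rewrite IHn; last by rewrite ltn_subrL ht.
rewrite subn_eq0 leqNgt.
by case: (t < n.+1); rewrite /= ?addr0 ?addn0 ?PoszD.
Qed.
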